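(* Let $f:\mathbb{R}^d\to\mathbb{R}$ be $L$-smooth (i.e. differentiable with $L$-Lipschitz gradient), let $g:\mathbb{R}^d\to\mathbb{R}$, let $h:\mathbb{R}^d\to\mathbb{R}\cup\{+\infty\}$ be proper, closed and convex, and let $\lambda>0$. Suppose that for every $w$ the minimum in $\min_{x}\left(\frac{1}{2\lambda}\|w-x\|_2^2+g(x)\right)$ is attained, and let $\zeta^{\lambda}(w)$ denote a chosen minimizer. Define $e_{\lambda}g(w)=\min_{x}\left(\frac{1}{2\lambda}\|w-x\|_2^2+g(x)\right)$, $D^{\lambda}(w)=\sup_{x\in\mathbb{R}^d}\left(\frac{1}{\lambda}w^Tx-\frac{1}{2\lambda}\|x\|_2^2-g(x)\right)$, and $\tilde\Phi_{\lambda}(w)=f(w)+e_{\lambda}g(w)+h(w)$. Fix a point $w^k\in\mathbb{R}^d$ and define $$U^k_{\lambda}(w)=\frac{1}{2\lambda}\|w\|_2^2-D^{\lambda}(w^k)-\frac{1}{\lambda}\zeta^{\lambda}(w^k)^T(w-w^k),\qquad E^k_{\lambda}(w)=f(w)+U^k_{\lambda}(w).$$ Then: (i) $E^k_{\lambda}(w)+h(w)\ge \tilde\Phi_{\lambda}(w)$ for all $w\in\mathbb{R}^d$; (ii) $E^k_{\lambda}(w^k)+h(w^k)=\tilde\Phi_{\lambda}(w^k)$; (iii) $E^k_{\lambda}$ is $L_{\lambda}$-smooth with $L_{\lambda}:=L+\frac{1}{\lambda}$.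
   Context: A function is $L$-smooth if it is differentiable and its gradient is $L$-Lipschitz with respect to the Euclidean norm. *)

From HB Require Import structures.
From mathcomp Require Import all_boot all_order all_algebra.
From mathcomp Require Import all_classical all_reals all_analysis.
Set Implicit Arguments. Unset Strict Implicit. Unset Printing Implicit Defensive.
Import Order.TTheory GRing.Theory Num.Theory.
Import numFieldNormedType.Exports.
Local Open Scope classical_set_scope.
Local Open Scope ring_scope.

Section Defs.
Context {R : realType} {d : nat}.
Local Notation V := 'rV[R]_d.

Definition dotv (u v : V) : R := \sum_(i < d) u ord0 i * v ord0 i.
Definition norm2 (u : V) : R := Num.sqrt (dotv u u).

Definition is_gradient (f : V -> R) (x gv : V) : Prop :=
  differentiable f x /\ forall v : V, 'd f x v = dotv gv v.

Definition Lsmooth (L : R) (f : V -> R) : Prop :=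
  exists grad : V -> V,
    (forall x, is_gradient f x (grad x)) /\
    (forall x y, norm2 (grad x - grad y) <= L * norm2 (x - y)).

Definition proper_fun (h : V -> \bar R) : Prop :=
  (forall x, h x != -oo%E) /\ (exists x, h x != +oo%E).
Definition closed_fun (h : V -> \bar R) : Prop := lower_semicontinuous h.
Definition convex_efun (h : V -> \bar R) : Prop :=
  forall (x y : V) (t : R), 0 <= t <= 1 ->
    (h ((t *: x + (1 - t) *: y)%R : V) <= t%:E * h x + (1 - t)%:E * h y)%E.

Definition moreau_env (lam : R) (g : V -> R) (w : V) : R :=
  inf [set (2 * lam)^-1 * norm2 (w - x) ^+ 2 + g x | x in [set: V]].
Definition Dlam (lam : R) (g : V -> R) (w : V) : R :=
  sup [set lam^-1 * dotv w x - (2 * lam)^-1 * norm2 x ^+ 2 - g x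
      | x in [set: V]].
End Defs.

From HB Require Import structures.
From mathcomp Require Import all_boot all_order all_algebra.
From mathcomp Require Import all_classical all_reals all_analysis.
From mathcomp Require Import ring lra.
Import Order.TTheory GRing.Theory Num.Theory.
Import numFieldNormedType.Exports.
Local Open Scope classical_set_scope.
Local Open Scope ring_scope.

(* Because ζ^λ selects minimizers, D^λ(w) = ‖w‖²/(2λ) - e_λ g(w).  Substituting
   this at w^k collapses U^k_λ to the quadratic w ↦ ‖w - ζ^λ(w^k)‖²/(2λ) + g(ζ^λ(w^k)),
   i.e. the Moreau objective at the frozen point x = ζ^λ(w^k).  It majorizes the
   minimum e_λ g and equals it at w^k, which gives (i) and (ii); and E^k_λ is f plus
   a quadratic whose gradient is (1/λ)-Lipschitz, which gives (iii). *)

Section EuclideanInnerProduct.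
Context {R : realType} {d : nat}.
Local Notation V := 'rV[R]_d.
Implicit Types (u v w : V) (c : R).

Lemma dotvC u v : dotv u v = dotv v u.
Proof. by apply: eq_bigr => i _; rewrite mulrC. Qed.

Lemma dotvDl u v w : dotv (u + v) w = dotv u w + dotv v w.
Proof. by rewrite /dotv -big_split; apply: eq_bigr => i _; rewrite mxE mulrDl. Qed.

Lemma dotvZl c u w : dotv (c *: u) w = c * dotv u w.
Proof. by rewrite /dotv mulr_sumr; apply: eq_bigr => i _; rewrite mxE mulrA. Qed.

Lemma dotvBl u v w : dotv (u - v) w = dotv u w - dotv v w.
Proof. by rewrite dotvDl -scaleN1r dotvZl mulN1r. Qed.

Lemma dotvDr u v w : dotv w (u + v) = dotv w u + dotv w v.
Proof. by rewrite dotvC dotvDl !(dotvC w). Qed.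

Lemma dotvZr c u w : dotv w (c *: u) = c * dotv w u.
Proof. by rewrite dotvC dotvZl dotvC. Qed.

Lemma dotvBr u v w : dotv w (u - v) = dotv w u - dotv w v.
Proof. by rewrite dotvC dotvBl !(dotvC w). Qed.

Lemma dotv0l w : dotv 0 w = 0.
Proof. by rewrite /dotv big1 // => i _; rewrite mxE mul0r. Qed.

Lemma dotvv_ge0 u : 0 <= dotv u u.
Proof. by apply: sumr_ge0 => i _; rewrite -expr2 sqr_ge0. Qed.

Lemma dotvv_eq0 {u} : dotv u u = 0 -> u = 0.
Proof.
move=> /eqP; rewrite psumr_eq0 => [/allP u0|i _]; last by rewrite -expr2 sqr_ge0.
apply/rowP => i; rewrite mxE.
by have /u0 := mem_index_enum i; rewrite mulf_eq0 orbb => /eqP.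
Qed.

Lemma norm2_ge0 u : 0 <= norm2 u.
Proof. exact: sqrtr_ge0. Qed.

Lemma sqr_norm2 u : norm2 u ^+ 2 = dotv u u.
Proof. by rewrite sqr_sqrtr // dotvv_ge0. Qed.

Lemma sqr_norm2B u v : norm2 (u - v) ^+ 2 = dotv u u - 2 * dotv u v + dotv v v.
Proof. by rewrite sqr_norm2 dotvBl !dotvBr (dotvC v u); ring. Qed.

Lemma norm2Z c u : norm2 (c *: u) = `|c| * norm2 u.
Proof. by rewrite /norm2 dotvZl dotvZr mulrA -expr2 sqrtrM ?sqr_ge0 // sqrtr_sqr. Qed.

Lemma CauchySchwarz u v : dotv u v ^+ 2 <= dotv u u * dotv v v.
Proof.
have [v0|vN0] := eqVneq (dotv v v) 0.
  by rewrite v0 (dotvv_eq0 v0) dotvC dotv0l expr0n /= mulr0.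
have v_gt0 : 0 < dotv v v by rewrite lt_def vN0 dotvv_ge0.
(* expand 0 <= ‖u - t v‖² at the minimizing t *)
pose t := dotv u v / dotv v v.
have := dotvv_ge0 (u - t *: v).
rewrite dotvBl !dotvBr !dotvZl !dotvZr (dotvC v u) => uv_ge0.
rewrite -subr_ge0; suff -> : dotv u u * dotv v v - dotv u v ^+ 2 =
    dotv v v * (dotv u u - t * dotv u v - (t * dotv u v - t * (t * dotv v v))).
  exact: mulr_ge0 (ltW v_gt0) uv_ge0.
by rewrite /t; field; rewrite gt_eqF.
Qed.

Lemma dotv_le_norm2 u v : dotv u v <= norm2 u * norm2 v.
Proof.
apply: le_trans (ler_norm _) _.
rewrite -sqrtr_sqr -sqrtrM ?dotvv_ge0 //.
exact/ler_wsqrtr/CauchySchwarz.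
Qed.

Lemma norm2D_le u v : norm2 (u + v) <= norm2 u + norm2 v.
Proof.
rewrite -[leRHS]ger0_norm ?addr_ge0 ?norm2_ge0 // -sqrtr_sqr.
apply: ler_wsqrtr; rewrite dotvDl !dotvDr sqrrD !sqr_norm2 (dotvC v u).
have := dotv_le_norm2 u v; lra.
Qed.

End EuclideanInnerProduct.

Section Gradient.
Context {R : realType} {d : nat}.
Local Notation V := 'rV[R]_d.
Implicit Types (f g : V -> R) (a b w x z : V).

Lemma is_gradientD {f g x a b} : is_gradient f x a -> is_gradient g x b ->
  is_gradient (f \+ g) x (a + b).
Proof.
move=> [df ef] [dg eg]; split; first exact: differentiableD.
by move=> v; rewrite diffD //= ef eg dotvDl.
Qed.

Lemma is_gradientZ c {f x a} : is_gradient f x a ->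
  is_gradient (fun w => c * f w) x (c *: a).
Proof.
move=> [df ef]; split; first exact: differentiableZ.
by move=> v; rewrite diffZ //= ef dotvZl.
Qed.

Lemma is_gradient_cst (c : R) x : is_gradient (fun _ : V => c) x 0.
Proof.
split; first exact: differentiable_cst.
by move=> v; rewrite diff_cst dotv0l.
Qed.

Lemma is_gradientM {f g x a b} : is_gradient f x a -> is_gradient g x b ->
  is_gradient (f \* g) x (f x *: b + g x *: a).
Proof.
move=> [df ef] [dg eg]; split; first exact: differentiableM.
move=> v; rewrite diffM //; transitivity (f x * 'd g x v + g x * 'd f x v) => //.
by rewrite ef eg dotvDl !dotvZl.
Qed.

Lemma is_gradient_sum {n} {F : 'I_n -> V -> R} {G : 'I_n -> V} {x} :
  (forall i, is_gradient (F i) x (G i)) ->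
  is_gradient (fun w => \sum_(i < n) F i w) x (\sum_(i < n) G i).
Proof.
move=> FG; suff : is_gradient (\sum_(i < n) F i) x (\sum_(i < n) G i).
  by congr is_gradient; apply/funext => w; rewrite fct_sumE.
apply: (big_ind2 (fun F a => is_gradient F x a)) => // [|F1 a1 F2 a2].
  exact: is_gradient_cst.
exact: is_gradientD.
Qed.

Definition rV_coord (i : 'I_d) (w : V) : R := w ord0 i.

Lemma rV_coord_is_linear i : linear (rV_coord i).
Proof. by move=> c u v; rewrite /rV_coord !mxE. Qed.
HB.instance Definition _ (i : 'I_d) :=
  GRing.isLinear.Build R V R _ (rV_coord i) (rV_coord_is_linear i).

Lemma dotv_deltal i w : dotv (delta_mx 0 i) w = w ord0 i.
Proof.
rewrite /dotv (bigD1 i) //= big1 ?addr0 => [|j ji]; first by rewrite mxE !eqxx mul1r.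
by rewrite mxE eqxx /= (negbTE ji) mul0r.
Qed.

Lemma is_gradient_rV_coord i x : is_gradient (rV_coord i) x (delta_mx 0 i).
Proof.
have coord_cont : continuous (rV_coord i : {linear V -> R}) by exact: coord_continuous.
split; first exact: linear_differentiable.
by move=> v; rewrite diff_lin // dotv_deltal.
Qed.

Lemma is_gradient_dotv a x : is_gradient (dotv a) x a.
Proof.
rewrite [X in is_gradient _ _ X]row_sum_delta.
apply: is_gradient_sum => i; exact: is_gradientZ (is_gradient_rV_coord i x).
Qed.

Lemma is_gradient_dotvv x : is_gradient (fun w => dotv w w) x (2 *: x).
Proof.
have -> : 2 *: x = \sum_(i < d) (x ord0 i *: delta_mx 0 i + x ord0 i *: delta_mx 0 i).
  by rewrite big_split /= -row_sum_delta scaler_nat.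
apply: is_gradient_sum => i.
exact: is_gradientM (is_gradient_rV_coord i x) (is_gradient_rV_coord i x).
Qed.

Lemma is_gradient_sqr_norm2B z x :
  is_gradient (fun w => norm2 (w - z) ^+ 2) x (2 *: (x - z)).
Proof.
suff : is_gradient (fun w => dotv w w + (- 2) * dotv z w + dotv z z) x
                   (2 *: x + (- 2) *: z + 0).
  congr is_gradient; last by rewrite addr0 scalerBr scaleNr.
  by apply/funext => w; rewrite sqr_norm2B (dotvC w z) mulNr.
apply: is_gradientD (is_gradient_cst _ _).
apply: is_gradientD (is_gradient_dotvv x) (is_gradientZ _ (is_gradient_dotv z x)).
Qed.

Lemma LsmoothD {L1 L2 f g} : Lsmooth L1 f -> Lsmooth L2 g -> Lsmooth (L1 + L2) (f \+ g).
Proof.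
move=> [df [df_grad df_lip]] [dg [dg_grad dg_lip]].
exists (df \+ dg); split=> [x|x y]; first exact: is_gradientD.
rewrite /= opprD addrACA mulrDl.
exact: le_trans (norm2D_le _ _) (lerD (df_lip x y) (dg_lip x y)).
Qed.

Lemma Lsmooth_sqr_dist c z (b : R) : 0 <= c ->
  Lsmooth c (fun w => c / 2 * norm2 (w - z) ^+ 2 + b).
Proof.
move=> c_ge0; exists (fun x => c *: (x - z)); split=> [x|x y].
  have := is_gradientD (is_gradientZ (c / 2) (is_gradient_sqr_norm2B z x))
                       (is_gradient_cst b x).
  by rewrite addr0 scalerA divfK ?pnatr_eq0.
by rewrite -scalerBr opprB addrA subrK norm2Z ger0_norm.
Qed.

End Gradient.

Lemma sup_eq_max (R : realType) (S : set R) m :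
  S m -> (forall y, S y -> y <= m) -> sup S = m.
Proof.
move=> Sm ub; apply/eqP; rewrite eq_le ge_sup /=; [|by exists m|by move=> y /ub].
by apply: ub_le_sup => //; exists m => y /ub.
Qed.

Lemma inf_eq_min (R : realType) (S : set R) m :
  S m -> (forall y, S y -> m <= y) -> inf S = m.
Proof.
move=> Sm lb; apply/eqP; rewrite eq_le lb_le_inf ?andbT; [|by exists m|by move=> y /lb].
by apply: ge_inf => //; exists m => y /lb.
Qed.

Section MoreauEnvelope.
Context {R : realType} {d : nat}.
Context {lam : R} {g : 'rV[R]_d -> R} {zeta : 'rV[R]_d -> 'rV[R]_d}.
Local Notation moreau_obj w x := ((2 * lam)^-1 * norm2 (w - x) ^+ 2 + g x).
Hypothesis zeta_min : forall w x, moreau_obj w (zeta w) <= moreau_obj w x.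

Lemma moreau_envE w : moreau_env lam g w = moreau_obj w (zeta w).
Proof.
apply: inf_eq_min => [|_ [x _ <-]]; [by exists (zeta w) | exact: zeta_min].
Qed.

Lemma moreau_env_le w x : moreau_env lam g w <= moreau_obj w x.
Proof. by rewrite moreau_envE. Qed.

Lemma DlamE w : Dlam lam g w = (2 * lam)^-1 * norm2 w ^+ 2 - moreau_env lam g w.
Proof.
have objE x : lam^-1 * dotv w x - (2 * lam)^-1 * norm2 x ^+ 2 - g x =
    (2 * lam)^-1 * norm2 w ^+ 2 - moreau_obj w x.
  (* with lam^-1 kept atomic, [field] needs no [lam != 0] *)
  by rewrite sqr_norm2B !sqr_norm2 invfM; set il := lam^-1; field.
rewrite moreau_envE; apply: sup_eq_max => [|_ [x _ <-]]; first by exists (zeta w).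
by rewrite objE lerD2l lerN2.
Qed.

Lemma moreau_majorantE wk w :
  (2 * lam)^-1 * norm2 w ^+ 2 - Dlam lam g wk - lam^-1 * dotv (zeta wk) (w - wk)
  = moreau_obj w (zeta wk).
Proof.
rewrite DlamE moreau_envE !sqr_norm2B !sqr_norm2 dotvBr (dotvC wk) (dotvC w).
by rewrite invfM; set il := lam^-1; field.
Qed.

End MoreauEnvelope.

Theorem mainTheorem1 (R : realType) (d : nat)
  (f g : 'rV[R]_d -> R) (h : 'rV[R]_d -> \bar R) (L lam : R)
  (zeta : 'rV[R]_d -> 'rV[R]_d) (wk : 'rV[R]_d) :
  Lsmooth L f ->
  proper_fun h -> closed_fun h -> convex_efun h ->
  0 < lam ->
  (forall w x : 'rV[R]_d,
     (2 * lam)^-1 * norm2 (w - zeta w) ^+ 2 + g (zeta w)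
       <= (2 * lam)^-1 * norm2 (w - x) ^+ 2 + g x) ->
  let Phi := fun w => ((f w + moreau_env lam g w)%:E + h w)%E in
  let U := fun w => (2 * lam)^-1 * norm2 w ^+ 2 - Dlam lam g wk
                    - lam^-1 * dotv (zeta wk) (w - wk) in
  let E := fun w => f w + U w in
  [/\ (forall w, Phi w <= (E w)%:E + h w)%E,
      ((E wk)%:E + h wk = Phi wk)%E &
      Lsmooth (L + lam^-1) E].
Proof.
move=> f_smooth _ _ _ lam_gt0 zeta_min Phi U E.
have UE w : U w = (2 * lam)^-1 * norm2 (w - zeta wk) ^+ 2 + g (zeta wk).
  by rewrite /U (moreau_majorantE zeta_min).
split=> [w||].
- by rewrite /Phi /E UE leeD2r // lee_fin lerD2l (moreau_env_le zeta_min).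
- by rewrite /Phi /E UE (moreau_envE zeta_min).
have -> : E = f \+ (fun w => lam^-1 / 2 * norm2 (w - zeta wk) ^+ 2 + g (zeta wk)).
  by apply: funext => w; rewrite /E /= UE invfM (mulrC 2^-1).
have inv_lam_ge0 : 0 <= lam^-1 by rewrite invr_ge0 ltW.
exact: LsmoothD f_smooth (Lsmooth_sqr_dist _ _ _ inv_lam_ge0).
Qed.
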